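(* Let $q\geq 3$ and $n\ge 2$. Consider the graph whose vertices are the $n\times n$ hermitian matrices over $\mathbb{F}_{q^2}$ of rank $n-1$, with $A,B$ adjacent iff $\operatorname{rank}(A-B)=1$. This graph has exactly $\frac{q^{2n}-1}{q^2-1}$ connected components, and these are precisely the sets $$\{P(\dot X\oplus 0)P^\ast:\ \dot X\in\mathcal{HGL}_{n-1}(\mathbb{F}_{q^2})\},$$ where $P$ ranges over invertible $n\times n$ matrices; each component is isomorphic to the graph on $\mathcal{HGL}_{n-1}(\mathbb{F}_{q^2})$ (with adjacency $\operatorname{rank}(A-B)=1$).
   Context: $\mathbb{F}_{q^2}$ is the field with $q^2$ elements with involution $\bar x=x^q$; $X^\ast=\bar X^\top$; hermitian means $A^\ast=A$; $\mathcal{HGL}_{m}(\mathbb{F}_{q^2})$ is the set of invertible $m\times m$ hermitian matrices over $\mathbb{F}_{q^2}$. *)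

From HB Require Import structures.
From mathcomp Require Import all_boot all_order all_algebra.
Set Implicit Arguments. Unset Strict Implicit. Unset Printing Implicit Defensive.
Import GRing.Theory.
Local Open Scope ring_scope.

(* Conjugate transpose X^* = (bar X)^T with bar x = x^q. *)
Definition conjT (F : fieldType) (q : nat) (m : nat) (A : 'M[F]_m) : 'M[F]_m :=
  (map_mx (fun x => x ^+ q) A)^T.

Definition hermitian (F : fieldType) (q m : nat) (A : 'M[F]_m) : bool :=
  conjT q A == A.

Definition HGL (F : finFieldType) (q m : nat) : {set 'M[F]_m} :=
  [set A : 'M[F]_m | hermitian q A && (A \in unitmx)].

(* X (+) 0 : the (n-1)x(n-1) matrix X padded by a zero last row and column *)
Definition pad0 (F : fieldType) (n : nat) (X : 'M[F]_(n.-1)) : 'M[F]_n :=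
  \matrix_(i < n, j < n)
    match @insub nat (fun k => k < n.-1)%N 'I_(n.-1) (val i),
          @insub nat (fun k => k < n.-1)%N 'I_(n.-1) (val j) with
    | Some i', Some j' => X i' j'
    | _, _ => 0
    end.

Definition Vrk (F : finFieldType) (q n : nat) : {set 'M[F]_n} :=
  [set A : 'M[F]_n | hermitian q A && (\rank A == n.-1)%N].

Definition adjV (F : finFieldType) (q n : nat) : rel 'M[F]_n :=
  fun A B => [&& A \in @Vrk F q n, B \in @Vrk F q n & (\rank (A - B)%R == 1)%N].

Definition components (F : finFieldType) (q n : nat) : {set {set 'M[F]_n}} :=
  [set [set B | connect (@adjV F q n) A B] | A in @Vrk F q n].

Definition Sset (F : finFieldType) (q n : nat) (P : 'M[F]_n) : {set 'M[F]_n} :=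
  [set P *m pad0 X *m conjT q P | X in @HGL F q n.-1].

(* A hermitian matrix of rank n - 1 has a one-dimensional left kernel, and it
   lies in { P (X (+) 0) P^* : X in HGL_(n-1) } exactly when that kernel is
   spanned by e_n P^-1.  If rank (A - B) = 1 for two such matrices, the row space
   of A - B lies in those of A and B, which forces A and B to share their kernel
   line; so each of these sets is a union of components.  Conversely each set is
   connected because HGL_(n-1) is: for hermitian invertible X <> Y, with
   H = Y - X and w = z H, the update Z = X + c w^* w with c = 1 / w z^* is
   hermitian, invertible and satisfies rank (Y - Z) < rank (Y - X) as soon as
   z H z^* and z (H + H X^-1 H) z^* are nonzero.  Such a z exists because along
   a line z1 + t z2 both forms are polynomials of degree q + 1 in t, and
   2q + 2 < q^2.  Components therefore correspond to the (q^(2n) - 1)/(q^2 - 1)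
   lines of F^n. *)

From HB Require Import structures.
From mathcomp Require Import all_boot all_order all_algebra all_fingroup all_solvable all_field.
From mathcomp Require Import ring zify.
Set Implicit Arguments. Unset Strict Implicit. Unset Printing Implicit Defensive.
Import GRing.Theory.
Local Open Scope ring_scope.

Section PadZero.
Variables (F : fieldType) (m : nat).
Local Notation lmax := (@lift m.+1 ord_max).
Local Notation pad := (@pad0 F m.+1).

Lemma eq_matrix_lift_max (A B : 'M[F]_m.+1) :
  (forall i j, A (lmax i) (lmax j) = B (lmax i) (lmax j)) ->
  (forall j, A ord_max j = B ord_max j) -> (forall i, A i ord_max = B i ord_max) ->
  A = B.
Proof.
move=> eq_lift eq_last_row eq_last_col; apply/matrixP=> a b.
case: (unliftP ord_max a) => [i ->|->]; last exact: eq_last_row.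
by case: (unliftP ord_max b) => [j ->|->]; [apply: eq_lift | apply: eq_last_col].
Qed.

Lemma pad0_lift (X : 'M[F]_m) i j : pad X (lmax i) (lmax j) = X i j.
Proof.
rewrite mxE (_ : \val (lmax i) = \val i); last exact: lift_max.
by rewrite (_ : \val (lmax j) = \val j) ?valK //; exact: lift_max.
Qed.

Lemma pad0_lastrow (X : 'M[F]_m) j : pad X ord_max j = 0.
Proof. by rewrite mxE /= insubN ?ltnn. Qed.

Lemma pad0_lastcol (X : 'M[F]_m) i : pad X i ord_max = 0.
Proof. by rewrite mxE /=; case: insub => // ?; rewrite insubF //= ltnn. Qed.

Lemma mxsub_pad0 (X : 'M[F]_m) : mxsub lmax lmax (pad X) = X.
Proof. by apply/matrixP=> i j; rewrite mxE pad0_lift. Qed.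

Lemma pad0_inj : injective pad.
Proof. by move=> X Y eqXY; rewrite -(mxsub_pad0 X) eqXY mxsub_pad0. Qed.

Lemma pad0_mxsub (B : 'M[F]_m.+1) :
  (forall j, B ord_max j = 0) -> (forall i, B i ord_max = 0) ->
  B = pad (mxsub lmax lmax B).
Proof.
move=> B_last_row B_last_col; apply: eq_matrix_lift_max => [i j|j|i].
- by rewrite pad0_lift mxE.
- by rewrite pad0_lastrow.
- by rewrite pad0_lastcol.
Qed.

Definition embmx : 'M[F]_(m.+1, m) := colsub lmax 1%:M.

Lemma mxsubE (B : 'M[F]_m.+1) : mxsub lmax lmax B = embmx^T *m B *m embmx.
Proof.
by rewrite /embmx mulmx_colsub mulmx1 trmx_mxsub trmx1 mul_rowsub_mx mul1mx mxsubcr.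
Qed.

Lemma embmx_tr_mul : embmx^T *m embmx = 1%:M.
Proof.
rewrite -[embmx^T]mulmx1 -mxsubE.
by apply/matrixP=> i j; rewrite !mxE (inj_eq lift_inj).
Qed.

Lemma embmx_mul_max p (Y : 'M[F]_(m, p)) j : (embmx *m Y) ord_max j = 0.
Proof. by rewrite mxE big1 // => k _; rewrite !mxE eq_liftF mul0r. Qed.

Lemma mul_embmx_tr_max p (Y : 'M[F]_(p, m)) i : (Y *m embmx^T) i ord_max = 0.
Proof. by rewrite mxE big1 // => k _; rewrite !mxE eq_liftF mulr0. Qed.

Lemma pad0E (X : 'M[F]_m) : pad X = embmx *m X *m embmx^T.
Proof.
apply: eq_matrix_lift_max => [i j|j|i].
- rewrite pad0_lift.
  have -> : (embmx *m X *m embmx^T) (lmax i) (lmax j)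
          = mxsub lmax lmax (embmx *m X *m embmx^T) i j by rewrite [RHS]mxE.
  by rewrite mxsubE !mulmxA embmx_tr_mul mul1mx -mulmxA embmx_tr_mul mulmx1.
- by rewrite pad0_lastrow -mulmxA embmx_mul_max.
- by rewrite pad0_lastcol mul_embmx_tr_max.
Qed.

Lemma pad0B (X Y : 'M[F]_m) : pad (X - Y) = pad X - pad Y.
Proof. by rewrite !pad0E mulmxBr mulmxBl. Qed.

Lemma mxrank_pad0 (X : 'M[F]_m) : \rank (pad X) = \rank X.
Proof.
apply/eqP; rewrite eqn_leq; apply/andP; split.
  by rewrite pad0E; apply: leq_trans (mxrankM_maxl _ _) (mxrankM_maxr _ _).
rewrite -{1}(mxsub_pad0 X) mxsubE.
by apply: leq_trans (mxrankM_maxl _ _) (mxrankM_maxr _ _).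
Qed.

Lemma delta_max_mul_pad0 (X : 'M[F]_m) :
  (delta_mx 0 ord_max : 'rV[F]_m.+1) *m pad X = 0.
Proof. by rewrite -rowE; apply/rowP=> j; rewrite [LHS]mxE pad0_lastrow mxE. Qed.

Lemma pad0_ker (X : 'M[F]_m) (w : 'rV[F]_m.+1) : X \in unitmx ->
  w *m pad X = 0 -> w = w 0 ord_max *: delta_mx 0 ord_max.
Proof.
move=> unitX wX0; have wE0 : w *m embmx = 0.
  rewrite -[LHS](mulmxK unitX) -[X in w *m embmx *m X]mulmx1 -embmx_tr_mul.
  by rewrite !mulmxA -(mulmxA w) -(mulmxA w) -pad0E wX0 !mul0mx.
apply/rowP=> b; rewrite !mxE eqxx /=.
case: (unliftP ord_max b) => [j ->|->]; last by rewrite eqxx mulr1.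
rewrite lift_eqF mulr0.
by have := congr1 (fun v : 'rV_m => v 0 j) wE0; rewrite /embmx mulmx_colsub mulmx1 !mxE.
Qed.
End PadZero.

Section FieldMatrix.
Variable F : fieldType.

Lemma mx11_mul n (a : 'M[F]_1) (A : 'M[F]_(1, n)) : a *m A = a 0 0 *: A.
Proof. by rewrite {1}[a]mx11_scalar mul_scalar_mx. Qed.

Lemma mxrank_outer m n (u : 'cV[F]_m) (w : 'rV[F]_n) :
  u != 0 -> w != 0 -> \rank (u *m w) = 1%N.
Proof.
move=> /cV0Pn [i ui] /rV0Pn [j wj]; apply/eqP.
rewrite eqn_leq (leq_trans (mxrankM_maxr _ _) (rank_leq_row w)) lt0n mxrank_eq0.
by apply/matrix0Pn; exists i, j; rewrite mxE big_ord1 mulf_neq0.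
Qed.

Lemma mxrank_unit_mulmx n (P A Q : 'M[F]_n) : P \in unitmx -> Q \in unitmx ->
  \rank (P *m A *m Q) = \rank A.
Proof.
by move=> unitP unitQ; rewrite mxrankMfree ?row_free_unit // eqmxMfull ?row_full_unit.
Qed.

Lemma exists_ker_row n (B : 'M[F]_n) : (\rank B < n)%N ->
  exists2 u : 'rV_n, u != 0 & u *m B = 0.
Proof.
move=> rankB; apply/det0P; rewrite -[_ == 0]negbK -unitfE -unitmxE.
by rewrite -row_free_unit /row_free ltn_eqF.
Qed.

Lemma exists_unit_row_max n (v : 'rV[F]_n.+1) : v != 0 ->
  exists2 Q : 'M_n.+1, Q \in unitmx & row ord_max Q = v.
Proof.
move=> v_neq0; have := mulmx_ebase v; rewrite rank_rV v_neq0.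
set a := col_ebase v 0 0; set R := row_ebase v => vE.
have a_neq0 : a != 0.
  apply: contra_neq v_neq0 => a0.
  by rewrite -vE [col_ebase v]mx11_scalar -/a a0 mul_scalar_mx scale0r !mul0mx.
have {}vE : v = a *: row 0 R.
  rewrite -vE mx11_mul -/a -scalemxAl rowE; congr (_ *: (_ *m _)).
  by apply/matrixP=> i j; rewrite !mxE ord1 eqxx /= andbT eq_sym.
exists (xrow 0 ord_max (a *: R)).
  by rewrite xrowE unitmx_mul unitmx_perm unitmxZ ?unitfE // row_ebase_unit.
by rewrite xrowEsub row_rowsub tpermR vE; apply/rowP=> j; rewrite !mxE.
Qed.

(* Sherman-Morrison: a kernel vector v of X + u w satisfies (v u)(1 + w X^-1 u) = 0. *)
Lemma unitmx_add_outer m (X : 'M[F]_m) (u : 'cV_m) (w : 'rV_m) :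
  X \in unitmx -> 1 + (w *m invmx X *m u) 0 0 != 0 -> X + u *m w \in unitmx.
Proof.
move=> unitX nz; rewrite unitmxE unitfE; apply/det0P => -[v v_neq0].
rewrite mulmxDr mulmxA mx11_mul; set a := (v *m u) 0 0 => vXuw.
have vE : v = - a *: (w *m invmx X).
  have vX : v *m X = - (a *: w) by apply/eqP; rewrite -addr_eq0 vXuw.
  by rewrite -[v](mulmxK unitX) vX mulNmx scaleNr scalemxAl.
have a0 : a = 0.
  have : a * (1 + (w *m invmx X *m u) 0 0) = 0.
    by rewrite mulrDr mulr1 {1}/a {1}vE -scalemxAl mxE mulNr addNr.
  by move/eqP; rewrite mulf_eq0 (negbTE nz) orbF => /eqP.
by case/eqP: v_neq0; rewrite vE a0 oppr0 scale0r.
Qed.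

Lemma mxrank_sub_outer_lt m n (H : 'M[F]_(m, n)) (y : 'cV_n) (z : 'rV_m) :
  (z *m H *m y) 0 0 != 0 ->
  (\rank (H - ((z *m H *m y) 0 0)^-1 *: (H *m y *m (z *m H)))%R < \rank H)%N.
Proof.
set s := (z *m H *m y) 0 0 => s_neq0; set H' := (H - _)%R.
have kerH_sub : (kermx H <= kermx H')%MS.
  by rewrite sub_kermx mulmxBr -scalemxAr !mulmxA mulmx_ker !mul0mx scaler0 subr0.
have z_ker : (z <= kermx H')%MS.
  rewrite sub_kermx mulmxBr -scalemxAr !mulmxA -(mulmxA _ z) -/s mx11_mul.
  by rewrite -/s scalerA mulVf // scale1r subrr.
have z_notker : ~~ (z <= kermx H)%MS.
  by rewrite sub_kermx; apply: contra s_neq0 => /eqP zH0; rewrite /s zH0 mul0mx mxE.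
have : (kermx H < kermx H')%MS.
  by rewrite ltmxE kerH_sub /=; apply: contra z_notker => /(submx_trans z_ker).
rewrite ltmxErank kerH_sub !mxrank_ker.
by have := rank_leq_row H; have := rank_leq_row H'; lia.
Qed.

End FieldMatrix.

Lemma exists_nonroot (R : finIdomainType) (p : {poly R}) :
  p != 0 -> (size p <= #|R|)%N -> exists t, ~~ root p t.
Proof.
move=> p_neq0 size_p; case: (pickP (fun t => ~~ root p t)) => [t|roots_p].
  by exists t.
have /allP/(max_poly_roots p_neq0) := fun t (_ : t \in enum R) => negbFE (roots_p t).
by rewrite enum_uniq -cardE ltnNge size_p => /(_ isT).
Qed.

Section Conjugation.
Variables (F : finFieldType) (q : nat).
Hypotheses (cardF : #|F| = (q ^ 2)%N) (q_gt0 : (0 < q)%N).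

Lemma pchar_nat_q : [pchar F].-nat q.
Proof.
have [p _ pcharFp] := finPcharP F.
rewrite (eq_pnat _ (pcharf_eq pcharFp)).
apply: (@pnat_dvd _ #|[set: F]%G|); first by rewrite cardsT cardF dvdn_exp.
by case/and3P: (fin_ring_pchar_abelem pcharFp).
Qed.

Definition conjf (x : F) : F := x ^+ q.

Lemma conjf_is_nmod_morphism : nmod_morphism conjf.
Proof.
split=> [|x y]; first by rewrite /conjf expr0n gtn_eqF.
exact: exprDn_pchar pchar_nat_q.
Qed.

Lemma conjf_is_monoid_morphism : monoid_morphism conjf.
Proof. by split=> [|x y]; rewrite /conjf ?expr1n ?exprMn. Qed.

HB.instance Definition _ := GRing.isNmodMorphism.Build F F conjf
  conjf_is_nmod_morphism.
HB.instance Definition _ := GRing.isMonoidMorphism.Build F F conjf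
  conjf_is_monoid_morphism.

Lemma conjfK : involutive conjf.
Proof. by move=> x; rewrite /conjf -exprM mulnn -cardF expf_card. Qed.

Definition ctmx m n (A : 'M[F]_(m, n)) : 'M[F]_(n, m) := (map_mx conjf A)^T.

Lemma ctmxE m n (A : 'M[F]_(m, n)) i j : ctmx A i j = conjf (A j i).
Proof. by rewrite !mxE. Qed.

Lemma ctmxK m n : cancel (@ctmx m n) (@ctmx n m).
Proof. by move=> A; apply/matrixP=> i j; rewrite !ctmxE conjfK. Qed.

Lemma ctmxM m n p (A : 'M[F]_(m, n)) (B : 'M[F]_(n, p)) :
  ctmx (A *m B) = ctmx B *m ctmx A.
Proof. by rewrite /ctmx map_mxM trmx_mul. Qed.

Lemma ctmxD m n (A B : 'M[F]_(m, n)) : ctmx (A + B) = ctmx A + ctmx B.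
Proof. by rewrite /ctmx map_mxD linearD. Qed.

Lemma ctmxB m n (A B : 'M[F]_(m, n)) : ctmx (A - B) = ctmx A - ctmx B.
Proof. by rewrite /ctmx map_mxB linearB. Qed.

Lemma ctmxZ m n a (A : 'M[F]_(m, n)) : ctmx (a *: A) = conjf a *: ctmx A.
Proof. by rewrite /ctmx map_mxZ linearZ. Qed.

Lemma ctmx1 m : ctmx (1%:M : 'M[F]_m) = 1%:M.
Proof. by rewrite /ctmx map_mx1 trmx1. Qed.

Lemma ctmx_unit m (A : 'M[F]_m) : (ctmx A \in unitmx) = (A \in unitmx).
Proof. by rewrite /ctmx unitmx_tr map_unitmx. Qed.

Lemma ctmx_inv m (A : 'M[F]_m) : ctmx (invmx A) = invmx (ctmx A).
Proof. by rewrite /ctmx map_invmx trmx_inv. Qed.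

Lemma ctmx_delta_row m (i : 'I_m) :
  ctmx (delta_mx 0 i : 'rV[F]_m) = delta_mx i 0.
Proof. by apply/matrixP=> a b; rewrite ctmxE !mxE andbC rmorph_nat. Qed.

Lemma ctmx_pad0 m (X : 'M[F]_m) : ctmx (@pad0 F m.+1 X) = pad0 (n := m.+1) (ctmx X).
Proof.
apply: eq_matrix_lift_max => [i j|j|i]; rewrite ctmxE.
- by rewrite !pad0_lift ctmxE.
- by rewrite pad0_lastcol pad0_lastrow rmorph0.
- by rewrite pad0_lastrow pad0_lastcol rmorph0.
Qed.

Lemma HGLP m (X : 'M[F]_m) :
  reflect (ctmx X = X /\ X \in unitmx) (X \in HGL F q m).
Proof. by rewrite inE; apply: (iffP andP) => -[/eqP]. Qed.

Definition hform m (M : 'M[F]_m) (x y : 'rV[F]_m) : F := (x *m M *m ctmx y) 0 0.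

Lemma hform_delta m (M : 'M[F]_m) i j :
  hform M (delta_mx 0 i) (delta_mx 0 j) = M i j.
Proof. by rewrite /hform ctmx_delta_row -rowE -colE !mxE. Qed.

Lemma conjf_hform m (M : 'M[F]_m) z : ctmx M = M -> conjf (hform M z z) = hform M z z.
Proof. by move=> hermM; rewrite /hform -ctmxE !ctmxM ctmxK hermM mulmxA. Qed.

Definition hform_line m (M : 'M[F]_m) z1 z2 : {poly F} :=
  (hform M z1 z1)%:P + hform M z2 z1 *: 'X + hform M z1 z2 *: 'X^q
  + hform M z2 z2 *: 'X^(q.+1).

Lemma hform_lineE m (M : 'M[F]_m) z1 z2 t :
  (hform_line M z1 z2).[t] = hform M (z1 + t *: z2) (z1 + t *: z2).
Proof.
rewrite !hornerE /hform ctmxD ctmxZ !mulmxDl !mulmxDr -!scalemxAl -!scalemxAr.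
by rewrite !mxE /conjf exprS; ring.
Qed.

Lemma size_hform_line m (M : 'M[F]_m) z1 z2 : (size (hform_line M z1 z2) <= q.+2)%N.
Proof.
have size_scale_Xn a k : (size (a *: 'X^k : {poly F}) <= k.+1)%N.
  by rewrite (leq_trans (size_scale_leq _ _)) ?size_polyXn.
rewrite /hform_line; apply: leq_trans (size_polyD _ _) _.
rewrite geq_max size_scale_Xn andbT; apply: leq_trans (size_polyD _ _) _.
rewrite geq_max (leq_trans (size_scale_Xn _ _)) // andbT.
apply: leq_trans (size_polyD _ _) _; rewrite geq_max (leq_trans (size_polyC_leq1 _)) //.
by rewrite (leq_trans (size_scale_leq _ _)) // size_polyX.
Qed.

Section LargeField.
Hypothesis q_gt2 : (2 < q)%N.

Lemma hform_line_coef m (M : 'M[F]_m) z1 z2 :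
  [/\ (hform_line M z1 z2)`_0 = hform M z1 z1,
      (hform_line M z1 z2)`_q = hform M z1 z2
    & (hform_line M z1 z2)`_q.+1 = hform M z2 z2].
Proof.
rewrite /hform_line !coefD !coefZ !coefXn !coefX !coefC /= !eqxx.
rewrite eqSS (gtn_eqF q_gt0) (ltn_eqF q_gt0) (gtn_eqF (ltnW q_gt2)).
by rewrite (ltn_eqF (ltnSn q)) (gtn_eqF (ltnSn q)) !(mulr0, mulr1, addr0, add0r).
Qed.

Lemma exists_hform_neq0 m (H : 'M[F]_m) : H != 0 -> exists z, hform H z z != 0.
Proof.
case/matrix0Pn => i [j Hij].
set p := hform_line H (delta_mx 0 i) (delta_mx 0 j).
have p_neq0 : p != 0.
  apply: contra_neq Hij => p0; rewrite -hform_delta.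
  by have [_ <- _] := hform_line_coef H (delta_mx 0 i) (delta_mx 0 j); rewrite -/p p0 coef0.
have [|t pt] := exists_nonroot p_neq0.
  by rewrite (leq_trans (size_hform_line _ _ _)) // cardF; nia.
by exists (delta_mx 0 i + t *: delta_mx 0 j); rewrite -hform_lineE.
Qed.

(* This is where q >= 3 is needed: the product has degree 2q + 2 < q^2. *)
Lemma exists_hform2_neq0 m (H K : 'M[F]_m) : H != 0 -> K != 0 ->
  exists z, hform H z z != 0 /\ hform K z z != 0.
Proof.
move=> /exists_hform_neq0 [z1 Hz1] /exists_hform_neq0 [z2 Kz2].
have pH_neq0 : hform_line H z1 z2 != 0.
  by apply: contra_neq Hz1 => p0; have [<- _ _] := hform_line_coef H z1 z2; rewrite p0 coef0.
have pK_neq0 : hform_line K z1 z2 != 0.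
  by apply: contra_neq Kz2 => p0; have [_ _ <-] := hform_line_coef K z1 z2; rewrite p0 coef0.
have [|t pt] := exists_nonroot (mulf_neq0 pH_neq0 pK_neq0).
  rewrite (leq_trans (size_polyMleq _ _)) // cardF.
  move: (size_hform_line H z1 z2) (size_hform_line K z1 z2).
  by move: (size _) (size _) => a b; nia.
exists (z1 + t *: z2); apply/andP; rewrite -!hform_lineE -negb_or -mulf_eq0.
by rewrite -hornerM.
Qed.

Lemma HGL_rank_one_step m (X Y : 'M[F]_m) : X \in HGL F q m -> Y \in HGL F q m ->
  Y != X -> exists2 Z, Z \in HGL F q m &
    \rank (Z - X) = 1%N /\ (\rank (Y - Z)%R < \rank (Y - X)%R)%N.
Proof.
move=> /HGLP [hermX unitX] /HGLP [hermY unitY]; rewrite -subr_eq0 => H_neq0.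
set H := Y - X; have hermH : ctmx H = H by rewrite ctmxB hermX hermY.
set K := H + H *m invmx X *m H.
have K_neq0 : K != 0.
  have -> : K = H *m (invmx X *m Y).
    by rewrite mulmxA -[in RHS](subrK X Y) -/H mulmxDr mulmxKV // addrC.
  by rewrite -mxrank_eq0 mxrankMfree ?row_free_unit ?unitmx_mul ?unitmx_inv ?unitX // mxrank_eq0.
have hermK : ctmx K = K by rewrite ctmxD !ctmxM ctmx_inv hermX hermH mulmxA.
have [z [Hz Kz]] := exists_hform2_neq0 H_neq0 K_neq0.
set s := hform H z z in Hz; set w := z *m H.
have ctw : ctmx w = H *m ctmx z by rewrite ctmxM hermH.
have [w_neq0 ctw_neq0] : w != 0 /\ ctmx w != 0.
  split; apply: contra_neq Hz => w0; rewrite /s /hform.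
    by rewrite -/w w0 !mul0mx mxE.
  by rewrite -mulmxA -ctw w0 mulmx0 mxE.
exists (X + s^-1 *: (ctmx w *m w)); last split.
- apply/HGLP; split; last first.
    rewrite scalemxAl; apply: unitmx_add_outer => //.
    rewrite -scalemxAr mxE -(mulVf Hz) -mulrDr mulf_neq0 ?invr_eq0 //.
    have <- // : hform K z z = s + (w *m invmx X *m ctmx w) 0 0.
    by rewrite /hform /K mulmxDr mulmxDl [LHS]mxE ctw /w !mulmxA.
  rewrite ctmxD ctmxZ ctmxM ctmxK hermX fmorphV.
  by congr (_ + _^-1 *: _); apply: conjf_hform.
- by rewrite addrAC subrr add0r (eqmx_scale _ (invr_neq0 Hz)) mxrank_outer.
- by rewrite opprD addrA ctw -/H; apply: mxrank_sub_outer_lt.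
Qed.

Lemma connect_HGL m (T : finType) (e : rel T) (f : 'M[F]_m -> T) :
  {in HGL F q m &, forall X Y, \rank (X - Y) = 1%N -> e (f X) (f Y)} ->
  {in HGL F q m &, forall X Y, connect e (f X) (f Y)}.
Proof.
move=> adj_f X Y HGL_X HGL_Y.
have [r] := ubnP (\rank (Y - X)); elim: r X HGL_X => // r IHr X HGL_X.
rewrite ltnS => rYX; have [<-|YX] := eqVneq Y X; first exact: connect0.
have [Z HGL_Z [rZX rYZ]] := HGL_rank_one_step HGL_X HGL_Y YX.
apply: connect_trans (connect1 _) (IHr Z HGL_Z _).
  by apply: adj_f; rewrite // -mxrank_opp opprB.
exact: leq_trans rYZ rYX.
Qed.

Section Components.
Variable m : nat.
Local Notation HGL := (HGL F q m).
Local Notation Vrk := (Vrk F q m.+1).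
Local Notation adjV := (@adjV F q m.+1).
Local Notation pad := (@pad0 F m.+1).

Lemma VrkP (A : 'M[F]_m.+1) : reflect (ctmx A = A /\ \rank A = m) (A \in Vrk).
Proof. by rewrite inE; apply: (iffP andP) => -[/eqP ? /eqP]. Qed.

(* The left kernel of every matrix of [Sset q P] is spanned by [kvec P]. *)
Definition kvec (P : 'M[F]_m.+1) : 'rV[F]_m.+1 := delta_mx 0 ord_max *m invmx P.

Definition embed (P : 'M[F]_m.+1) (X : 'M[F]_m) : 'M[F]_m.+1 := P *m pad X *m ctmx P.

Lemma kvec_neq0 P : P \in unitmx -> kvec P != 0.
Proof.
move=> unitP; apply: contraTneq isT => kP0.
have := congr1 (mulmx^~ P) kP0; rewrite /kvec mulmxKV // mul0mx.
by move/matrixP/(_ 0 ord_max); rewrite !mxE !eqxx => /eqP; rewrite oner_eq0.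
Qed.

Lemma mxrank_embedB P X Y : P \in unitmx ->
  \rank (embed P X - embed P Y) = \rank (X - Y).
Proof.
move=> unitP; rewrite -mulmxBl -mulmxBr -pad0B mxrank_unit_mulmx ?ctmx_unit //.
exact: mxrank_pad0.
Qed.

Lemma embed_inj P : P \in unitmx -> injective (embed P).
Proof.
move=> unitP X Y /(congr1 (fun A => invmx P *m A *m invmx (ctmx P))).
by rewrite /embed !mulmxA !mulVmx // !mul1mx !mulmxK ?ctmx_unit //; apply: pad0_inj.
Qed.

Lemma embed_Vrk P X : P \in unitmx -> X \in HGL -> embed P X \in Vrk.
Proof.
move=> unitP /HGLP [hermX unitX]; apply/VrkP; split.
  by rewrite /embed !ctmxM ctmxK ctmx_pad0 hermX mulmxA.
by rewrite mxrank_unit_mulmx ?ctmx_unit // mxrank_pad0 mxrank_unit.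
Qed.

Lemma embed_kerP P X (v : 'rV[F]_m.+1) : P \in unitmx -> X \in unitmx ->
  reflect (exists c, v = c *: kvec P) (v *m embed P X == 0).
Proof.
move=> unitP unitX; apply: (iffP eqP) => [vA0|[c ->]]; last first.
  by rewrite -scalemxAl /embed /kvec !mulmxA mulmxKV // delta_max_mul_pad0 !mul0mx scaler0.
have vPpad0 : v *m P *m pad X = 0.
  have := congr1 (mulmx^~ (invmx (ctmx P))) vA0.
  by rewrite mul0mx /embed !mulmxA mulmxK ?ctmx_unit.
by exists ((v *m P) 0 ord_max); rewrite /kvec scalemxAl -(pad0_ker unitX vPpad0) mulmxK.
Qed.

Lemma Sset_ker P B : P \in unitmx -> B \in Vrk -> kvec P *m B = 0 -> B \in Sset q P.
Proof.
move=> unitP /VrkP [hermB rankB] kB0.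
set B' := invmx P *m B *m invmx (ctmx P).
have hermB' : ctmx B' = B' by rewrite /B' !ctmxM !ctmx_inv ctmxK hermB mulmxA.
have B'_last_row j : B' ord_max j = 0.
  have : row ord_max B' = 0 by rewrite rowE /B' !mulmxA -/(kvec P) kB0 mul0mx.
  by move/rowP/(_ j); rewrite !mxE.
have B'_last_col i : B' i ord_max = 0 by rewrite -hermB' ctmxE B'_last_row rmorph0.
have B'E := pad0_mxsub B'_last_row B'_last_col.
set Y := mxsub _ _ B' in B'E.
have hermY : ctmx Y = Y by apply: pad0_inj; rewrite -ctmx_pad0 -B'E.
have unitY : Y \in unitmx.
  rewrite -row_free_unit /row_free -(mxrank_pad0 Y) -B'E /B'.
  by rewrite mxrank_unit_mulmx ?unitmx_inv ?ctmx_unit ?rankB.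
apply/imsetP; exists Y; first exact/HGLP.
by rewrite /embed -B'E /B' -!mulmxA mulVmx ?ctmx_unit // mulmx1 mulKVmx.
Qed.

Lemma adjV_Sset P A B : P \in unitmx -> A \in Sset q P -> adjV A B -> B \in Sset q P.
Proof.
move=> unitP /imsetP [X HGL_X ->] /and3P [_ VB /eqP rankM].
apply: (Sset_ker unitP VB); have /HGLP [_ unitX] := HGL_X.
have kA0 : kvec P *m embed P X = 0.
  by apply/eqP/embed_kerP => //; exists 1; rewrite scale1r.
have /VrkP [hermA _] := embed_Vrk unitP HGL_X; have /VrkP [hermB rankB] := VB.
set M := embed P X - B in rankM; have hermM : ctmx M = M by rewrite ctmxB hermA hermB.
have kME : kvec P *m M = - (kvec P *m B) by rewrite mulmxBr kA0 sub0r.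
have [kM0|kM_neq0] := eqVneq (kvec P *m M) 0.
  by apply/eqP; rewrite -oppr_eq0 -kME kM0.
(* M has rank one, so its row space is that of kvec P *m M, which lies in that of B. *)
have /submxP [D MDB] : (M <= B)%MS.
  have : (M <= kvec P *m M)%MS.
    by rewrite -(mxrank_leqif_sup (submxMl _ _)).2 rankM rank_rV kM_neq0.
  by move/submx_trans; apply; rewrite kME -mulNmx submxMl.
have [u u_neq0 uB0] : exists2 u : 'rV_m.+1, u != 0 & u *m B = 0.
  by apply: exists_ker_row; rewrite rankB.
have /(embed_kerP _ unitP unitX) [c uE] : u *m embed P X == 0.
  by rewrite -(subrK B (embed P X)) -/M -hermM MDB ctmxM hermB mulmxDr mulmxA uB0 mul0mx addr0.
have c_neq0 : c != 0 by apply: contra_neq u_neq0; rewrite uE => ->; rewrite scale0r.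
by rewrite -[kvec P](scalerK c_neq0) -uE -scalemxAl uB0 scaler0.
Qed.

Lemma HGL1 : 1%:M \in HGL.
Proof. by apply/HGLP; rewrite ctmx1 unitmx1. Qed.

Lemma embed1_Sset P : embed P 1%:M \in Sset q P.
Proof. exact: imset_f HGL1. Qed.

Lemma connect_SsetE P A : P \in unitmx -> A \in Sset q P ->
  [set B | connect adjV A B] = Sset q P.
Proof.
move=> unitP SA; apply/setP => B; rewrite inE; apply/idP/idP.
  case/connectP => p + ->; elim: p A SA => //= C p IHp A SA /andP [AC].
  exact/IHp/(adjV_Sset unitP SA AC).
case/imsetP: SA => X HGL_X ->; case/imsetP => Y HGL_Y ->.
apply: (connect_HGL (f := embed P) _ HGL_X HGL_Y) => X' Y' HGL_X' HGL_Y' rankXY.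
by rewrite /adjV !embed_Vrk // mxrank_embedB // rankXY.
Qed.

Lemma exists_kvec v : v != 0 -> exists2 P, P \in unitmx & kvec P = v.
Proof.
case/exists_unit_row_max => Q unitQ rowQ.
by exists (invmx Q); rewrite ?unitmx_inv // /kvec invmxK -rowE.
Qed.

Lemma Vrk_Sset A : A \in Vrk -> exists2 P, P \in unitmx & A \in Sset q P.
Proof.
move=> VA; have /VrkP [_ rankA] := VA.
have [u u_neq0 uA0] : exists2 u : 'rV_m.+1, u != 0 & u *m A = 0.
  by apply: exists_ker_row; rewrite rankA.
have [P unitP kP] := exists_kvec u_neq0.
by exists P => //; apply: Sset_ker; rewrite ?kP.
Qed.

Lemma componentsE : components F q m.+1 = [set Sset q P | P : 'M_m.+1 & P \in unitmx].
Proof.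
apply/setP => C; apply/imsetP/imsetP => [[A VA ->]|[P /[!inE] unitP ->]].
  have [P unitP SA] := Vrk_Sset VA.
  by exists P; rewrite ?inE // (connect_SsetE unitP SA).
exists (embed P 1%:M); first exact: embed_Vrk HGL1.
by rewrite (connect_SsetE unitP (embed1_Sset P)).
Qed.

Definition kerline (C : {set 'M[F]_m.+1}) : {set 'rV[F]_m.+1} :=
  [set v | (v != 0) && [exists A in C, v *m A == 0]].

Lemma kerline_SsetE P : P \in unitmx ->
  kerline (Sset q P) = [set c *: kvec P | c in [set~ 0]].
Proof.
move=> unitP; apply/setP => v; rewrite inE; apply/andP/imsetP.
  case=> v_neq0 /existsP [_ /andP [/imsetP [X /HGLP [_ unitX] ->]]].
  case/(embed_kerP _ unitP unitX) => c vE; exists c => //.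
  by rewrite !inE; apply: contra_neq v_neq0; rewrite vE => ->; rewrite scale0r.
case=> c /[!inE] c_neq0 ->; split; first by rewrite scaler_eq0 negb_or c_neq0 kvec_neq0.
apply/existsP; exists (embed P 1%:M); rewrite embed1_Sset /=.
by apply/(embed_kerP _ unitP (unitmx1 _ _)); exists c.
Qed.

Lemma kvec_kerline P : P \in unitmx -> kvec P \in kerline (Sset q P).
Proof.
move=> unitP; rewrite kerline_SsetE //; apply/imsetP.
by exists 1; rewrite ?scale1r ?inE ?oner_neq0.
Qed.

Lemma card_kerline_Sset P : P \in unitmx -> #|kerline (Sset q P)| = #|F|.-1.
Proof.
move=> unitP; rewrite kerline_SsetE // card_in_imset ?cardsC1 // => c d _ _.
move/eqP; rewrite -subr_eq0 -scalerBl scaler_eq0 (negbTE (kvec_neq0 unitP)) orbF.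
by rewrite subr_eq0 => /eqP.
Qed.

Lemma kerline_Sset_inj P1 P2 v : P1 \in unitmx -> P2 \in unitmx ->
  v \in kerline (Sset q P1) -> v \in kerline (Sset q P2) -> Sset q P1 = Sset q P2.
Proof.
move=> unitP1 unitP2; rewrite !kerline_SsetE //.
case/imsetP => c1 /[!inE] c1_neq0 -> /imsetP [c2 _ kE].
have /(Sset_ker unitP1 (embed_Vrk unitP2 HGL1)) S1A : kvec P1 *m embed P2 1%:M = 0.
  have /eqP : c1 *: (kvec P1 *m embed P2 1%:M) = 0.
    by rewrite scalemxAl kE; apply/eqP/(embed_kerP _ unitP2 (unitmx1 _ _)); exists c2.
  by rewrite scaler_eq0 (negbTE c1_neq0) => /eqP.
by rewrite -(connect_SsetE unitP1 S1A) (connect_SsetE unitP2 (embed1_Sset P2)).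
Qed.

(* The sets kerline C partition the nonzero vectors into classes of size #|F| - 1. *)
Lemma card_components_mul :
  (#|components F q m.+1| * #|F|.-1)%N = (#|F| ^ m.+1).-1.
Proof.
set comps := components F q m.+1.
have compsP C : C \in comps -> exists2 P, P \in unitmx & C = Sset q P.
  by rewrite /comps componentsE => /imsetP [P /[!inE] unitP ->]; exists P.
have Sset_comps P : P \in unitmx -> Sset q P \in comps.
  by move=> unitP; rewrite /comps componentsE imset_f ?inE.
have partK : partition (kerline @: comps) [set~ 0].
  apply/and3P; split.
  - apply/eqP/setP => v; rewrite !inE; apply/bigcupP/idP.
      by case=> _ /imsetP [C _ ->]; rewrite inE => /andP [].
    move=> /exists_kvec [P unitP <-].
    by exists (kerline (Sset q P)); rewrite ?imset_f ?Sset_comps ?kvec_kerline.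
  - apply/trivIsetP => B1 B2 /imsetP [C1 /compsP [P1 unitP1 ->] ->].
    move=> /imsetP [C2 /compsP [P2 unitP2 ->] ->] neqK.
    rewrite -setI_eq0; apply/set0Pn => -[v /setIP [v1 v2]].
    by case/eqP: neqK; rewrite (kerline_Sset_inj unitP1 unitP2 v1 v2).
  - apply/imsetP => -[C /compsP [P unitP ->] /setP /(_ (kvec P))].
    by rewrite in_set0 kvec_kerline.
have := card_uniform_partition (n := #|F|.-1) _ partK.
rewrite cardsC1 card_mx mul1n => ->.
- congr (_ * _)%N; symmetry; apply: card_in_imset => C1 C2 /compsP [P1 unitP1 ->].
  case/compsP => P2 unitP2 -> eqK.
  by apply: (kerline_Sset_inj unitP1 unitP2 (kvec_kerline unitP1)); rewrite -eqK kvec_kerline.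
- by move=> _ /imsetP [C /compsP [P unitP ->] ->]; apply: card_kerline_Sset.
Qed.

End Components.
End LargeField.
End Conjugation.

Unset Implicit Arguments.
Set Strict Implicit.

Theorem lemma3p7 (F : finFieldType) (q n : nat)
  (hF : #|F| = (q ^ 2)%N) (hq : (3 <= q)%N) (hn : (2 <= n)%N) :
  [/\ #|@components F q n| = ((q ^ (2 * n) - 1) %/ (q ^ 2 - 1))%N,
      @components F q n = [set @Sset F q n P | P : 'M[F]_n & P \in unitmx]
    & forall C, C \in @components F q n ->
        exists f : 'M[F]_(n.-1) -> 'M[F]_n,
          [/\ {in @HGL F q n.-1 &, injective f},
              C = f @: @HGL F q n.-1
            & {in @HGL F q n.-1 &, forall X Y,
                 (\rank (f X - f Y)%R == 1)%N = (\rank (X - Y)%R == 1)%N}]].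
Proof.
have q_gt0 : (0 < q)%N by apply: leq_trans hq.
case: n hn => [|m] // _; split.
- have q2B1_gt0 : (0 < q ^ 2 - 1)%N by rewrite subn_gt0 (ltn_exp2l 0 2) // (leq_trans _ hq).
  have := card_components_mul hF q_gt0 hq m.
  by rewrite hF -expnM -!subn1 => <-; rewrite mulnK.
- exact: componentsE.
move=> C; rewrite (componentsE hF q_gt0 hq) => /imsetP [P /[!inE] unitP ->].
exists (embed q P); split => //; first exact: in2W (embed_inj hF q_gt0 unitP).
by move=> X Y _ _; rewrite mxrank_embedB.
Qed.
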